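(* Color each positive integer $\ell$ as follows: write $\ell=\sum_i b_i 11^i$ with digits $0\le b_i\le 10$, let $j$ be the smallest index with $b_j\neq 0$, and color $\ell$ white if $b_j\in\{1,3,4,5,9\}$ and black if $b_j\in\{2,6,7,8,10\}$. Then there is a constant $C$ such that for every $n$, the number $N$ of monochromatic $4$-APs in $[n]$ under this coloring satisfies $\left|N-\frac{1}{72}n^2\right|\le Cn$.
   Context: A $4$-AP in $[n]=\{1,\ldots,n\}$ is a sequence $a,a+d,a+2d,a+3d$ of elements of $[n]$ with integer $d\ge 1$; it is monochromatic if all four terms have the same color. *)

From HB Require Import structures.
From mathcomp Require Import all_boot all_order all_algebra.
Set Implicit Arguments. Unset Strict Implicit. Unset Printing Implicit Defensive.

(* Lowest nonzero base-11 digit b_j of l (for l > 0); fuel argument k.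
   With fuel l it is correct for every l > 0, since the 11-adic valuation
   of l is < l. *)
Fixpoint lowdigit11_aux (k l : nat) : nat :=
  match k with
  | 0 => l %% 11
  | k'.+1 => if l %% 11 == 0 then lowdigit11_aux k' (l %/ 11) else l %% 11
  end.

Definition lowdigit11 (l : nat) : nat := lowdigit11_aux l l.

Definition white (l : nat) : bool := lowdigit11 l \in [:: 1; 3; 4; 5; 9].

Definition mono4 (a d : nat) : bool :=
  [&& white (a + d) == white a, white (a + 2 * d) == white a
    & white (a + 3 * d) == white a].

Definition N4 (n : nat) : nat :=
  \sum_(1 <= a < n.+1) \sum_(1 <= d < n.+1) ((a + 3 * d <= n) && mono4 a d).

From HB Require Import structures.
From mathcomp Require Import all_boot all_order all_algebra.
From mathcomp Require Import zify lra.
Import Order.TTheory GRing.Theory Num.Theory.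

(* The colouring is 11-adically self-similar: l and 11 l have the same colour,
   and if 11 does not divide l its colour is decided by whether l mod 11 is a
   nonzero quadratic residue mod 11 ({1,3,4,5,9}).  Consequently, for a, d > 0,
     - if 11 does not divide d, the 4-AP a, ..., a + 3d is never monochromatic
       (a finite check over the residues of a and d mod 11);
     - if 11 divides d but not a, all four terms share the residue of a, so the
       4-AP is monochromatic;
     - if 11 divides both, it is monochromatic iff (a/11, d/11) is.  An arithmetic-series computation gives
   N4_ndvd n = 5 n^2 / 363 + O(n); since 1/72 = 5/363 + (1/121) (1/72), strong
   induction on n yields |72 N4 n - n^2| <= 100 n, whence the theorem. *)

Lemma lowdigit11_aux_fuel k k' l : 0 < l -> l <= k -> l <= k' ->
  lowdigit11_aux k l = lowdigit11_aux k' l.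
Proof.
elim: k k' l => [|k IH] [|k'] l // l_gt0 lk lk'; try lia.
rewrite /=; case: eqP => // l_mod.
have q_gt0 : 0 < l %/ 11.
  rewrite divn_gt0 //; move/eqP: l_mod; rewrite -/(11 %| l) => /dvdnP [c l_eq]; lia.
have q_lt : l %/ 11 < l by rewrite ltn_Pdiv.
apply: IH => //; lia.
Qed.

Lemma lowdigit11_mod l : l %% 11 != 0 -> lowdigit11 l = l %% 11.
Proof. by case: l => [|l] //= l_mod; rewrite /lowdigit11 /= (negbTE l_mod). Qed.

Lemma lowdigit11_mul11 l : 0 < l -> lowdigit11 (11 * l) = lowdigit11 l.
Proof.
move=> l_gt0; rewrite /lowdigit11; case E: (11 * l) => [|m]; first lia.
rewrite /= -E modnMr /= mulKn //; apply: lowdigit11_aux_fuel => //; lia.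
Qed.

Definition qr11 (x : nat) : bool := x \in [:: 1; 3; 4; 5; 9].

Lemma white_mul11 l : 0 < l -> white (11 * l) = white l.
Proof. by move=> l_gt0; rewrite /white lowdigit11_mul11. Qed.

Lemma white_mod l : l %% 11 != 0 -> white l = qr11 (l %% 11).
Proof. by move=> l_mod; rewrite /white lowdigit11_mod. Qed.

Definition bicolored_ap (r s : nat) : bool :=
  has (fun i => has (fun j =>
     [&& (r + i * s) %% 11 != 0, (r + j * s) %% 11 != 0 &
         qr11 ((r + i * s) %% 11) != qr11 ((r + j * s) %% 11)]) (iota 0 4))
    (iota 0 4).

Lemma bicolored_ap_all r s : r < 11 -> 0 < s < 11 -> bicolored_ap r s.
Proof.
have all_rs : all (fun r => all (bicolored_ap r) (iota 1 10)) (iota 0 11).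
  by vm_compute.
move=> r_lt /andP [s_gt0 s_lt].
move/allP: all_rs => /(_ r); rewrite mem_iota => /(_ r_lt) /allP; apply.
rewrite mem_iota; lia.
Qed.

Lemma mono4E a d : mono4 a d =
  [&& white (a + 1 * d) == white (a + 0 * d), white (a + 2 * d) == white (a + 0 * d)
    & white (a + 3 * d) == white (a + 0 * d)].
Proof. by rewrite mul1n mul0n addn0. Qed.

Lemma mono4_term a d i : mono4 a d -> i < 4 -> white (a + i * d) = white a.
Proof.
case/and3P => /eqP w1 /eqP w2 /eqP w3; case: i => [|[|[|[|i]]]] // _.
- by rewrite mul0n addn0.
- by rewrite mul1n.
Qed.

Lemma mono4_ndvd a d : ~~ (11 %| d) -> ~~ mono4 a d.
Proof.
move=> d_ndvd; apply/negP => /mono4_term mono.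
have : bicolored_ap (a %% 11) (d %% 11).
  by apply: bicolored_ap_all; rewrite ltn_mod // andbT lt0n.
have res i : (a %% 11 + i * (d %% 11)) %% 11 = (a + i * d) %% 11.
  by rewrite -modnDm -[RHS]modnDm modn_mod modnMmr.
case/hasP => i; rewrite mem_iota => /andP [_ i_lt].
case/hasP => j; rewrite mem_iota => /andP [_ j_lt].
rewrite !res => /and3P [ai aj].
by rewrite -(white_mod _ ai) -(white_mod _ aj) (mono i) // (mono j) // eqxx.
Qed.

(* If 11 divides d but not a, all terms have the residue of a. *)
Lemma mono4_ndvd_start a d : ~~ (11 %| a) -> 11 %| d -> mono4 a d.
Proof.
move=> a_ndvd /eqP d_mod.
have col i : white (a + i * d) = qr11 (a %% 11).
  rewrite white_mod -modnDm -modnMmr d_mod muln0 mod0n addn0 modn_mod //.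
by rewrite mono4E !col !eqxx.
Qed.

Lemma mono4_mul11 a d : 0 < a -> mono4 (11 * a) (11 * d) = mono4 a d.
Proof.
move=> a_gt0; have col i : white (11 * a + i * (11 * d)) = white (a + i * d).
  have -> : 11 * a + i * (11 * d) = 11 * (a + i * d) by lia.
  by rewrite white_mul11 //; lia.
by rewrite !mono4E !col.
Qed.

Lemma mono4_dvd a d : 0 < a -> 11 %| d ->
  mono4 a d = ~~ (11 %| a) || mono4 (a %/ 11) (d %/ 11).
Proof.
move=> a_gt0 d_dvd; have [a_dvd|a_ndvd] /= := boolP (11 %| a); last first.
  exact: mono4_ndvd_start.
move/dvdnP: a_dvd a_gt0 => [a' ->] a_gt0; move/dvdnP: d_dvd => [d' ->].
by rewrite !mulnK // ![_ * 11]mulnC mono4_mul11 //; lia.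
Qed.

Lemma sum_dvd_reindex k (G : nat -> nat) n : 0 < k ->
  \sum_(1 <= a < n.+1) (k %| a) * G (a %/ k) = \sum_(1 <= a < (n %/ k).+1) G a.
Proof.
move=> k_gt0; elim: n => [|n IH]; first by rewrite div0n !big_geq.
rewrite big_nat_recr //= IH (divnS n k_gt0).
case: (k %| n.+1) => /=; first by rewrite add1n mul1n [RHS]big_nat_recr.
by rewrite mul0n addn0 add0n.
Qed.

Lemma count_ndvd k m : 0 < k -> \sum_(1 <= a < m.+1) ~~ (k %| a) = m - m %/ k.
Proof.
move=> k_gt0; elim: m => [|m IH]; first by rewrite big_geq.
rewrite big_nat_recr //= IH divnS //.
have := leq_div m k; case: (k %| m.+1) => /=; lia.
Qed.

Lemma count_ndvd_shift k c n : 0 < k ->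
  \sum_(1 <= a < n.+1) ((a + c <= n) && ~~ (k %| a)) = (n - c) - (n - c) %/ k.
Proof.
move=> k_gt0; rewrite (big_cat_nat (n := (n - c).+1)) //=; last by lia.
rewrite -count_ndvd // [X in _ + X = _]big1_seq ?addn0; last first.
  move=> a /andP [_]; rewrite mem_index_iota => a_range.
  by have -> : (a + c <= n) = false by lia.
apply: eq_big_nat => a a_range.
by have -> : (a + c <= n) = true by lia.
Qed.

(* The number of 4-APs in [1, n] whose difference is a multiple 11 e of 11 and
   whose first term is prime to 11 (all monochromatic, by [mono4_dvd]): for
   each e there are m - m/11 such first terms, where m = n - 33 e. *)
Definition N4_ndvd (n : nat) : nat :=
  \sum_(1 <= e < (n %/ 11).+1) ((n - 33 * e) - (n - 33 * e) %/ 11).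

Lemma mono4_indicator_dvd n a d : 0 < a -> 11 %| d ->
  ((a + 3 * d <= n) && mono4 a d) =
  ((a + 33 * (d %/ 11) <= n) && ~~ (11 %| a)) +
  (11 %| a) * ((a %/ 11 + 3 * (d %/ 11) <= n %/ 11) && mono4 (a %/ 11) (d %/ 11)) :> nat.
Proof.
move=> a_gt0 d_dvd; rewrite mono4_dvd //; move/dvdnP: d_dvd => [e ->]; rewrite mulnK //.
have [/dvdnP [a' ->]|a_ndvd] /= := boolP (11 %| a).
  rewrite mulnK // andbF add0n mul1n leq_divRL //.
  by have -> : a' * 11 + 3 * (e * 11) = (a' + 3 * e) * 11 by lia.
by rewrite !andbT mul0n addn0; have -> : 3 * (e * 11) = 33 * e by lia.
Qed.

Lemma N4_rec n : N4 n = N4 (n %/ 11) + N4_ndvd n.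
Proof.
rewrite /N4 exchange_big /=.
pose X e := \sum_(1 <= a < n.+1) ((a + 33 * e <= n) && ~~ (11 %| a)).
pose Y e := \sum_(1 <= a < (n %/ 11).+1) ((a + 3 * e <= n %/ 11) && mono4 a e).
transitivity (\sum_(1 <= d < n.+1) (11 %| d) * (X (d %/ 11) + Y (d %/ 11))).
  apply: eq_big_nat => d /andP [d_gt0 _].
  have [d_dvd|d_ndvd] := boolP (11 %| d); last first.
    rewrite mul0n big1_seq // => a _.
    by rewrite (negbTE (mono4_ndvd a _ d_ndvd)) andbF.
  rewrite mul1n /X /Y -sum_dvd_reindex // -big_split /=.
  apply: eq_big_nat => a /andP [a_gt0 _]; exact: mono4_indicator_dvd.
rewrite (sum_dvd_reindex 11 (fun e => X e + Y e)) // big_split /= addnC.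
congr (_ + _); first by rewrite /Y exchange_big.
by apply: eq_big_nat => e _; exact: count_ndvd_shift.
Qed.

Definition arith_sum (n c F : nat) : nat := \sum_(1 <= e < F.+1) (n - c * e).

(* Each term m - m/11 of [N4_ndvd] lies in [10m/11, 10m/11 + 10/11]. *)
Lemma N4_ndvd_sandwich n :
  10 * arith_sum n 33 (n %/ 11) <= 11 * N4_ndvd n <=
  10 * arith_sum n 33 (n %/ 11) + 10 * (n %/ 11).
Proof.
apply/andP; split.
  rewrite /N4_ndvd /arith_sum !big_distrr /=; apply: leq_sum => e _.
  have := leq_divM (n - 33 * e) 11; lia.
have -> : 10 * (n %/ 11) = \sum_(1 <= e < (n %/ 11).+1) 10.
  by rewrite sum_nat_const_nat; lia.
rewrite /N4_ndvd /arith_sum !big_distrr /= -big_split /=; apply: leq_sum => e _.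
have := divn_eq (n - 33 * e) 11; have := ltn_pmod (n - 33 * e) (isT : 0 < 11); lia.
Qed.

(* The terms n - c e vanish for e > n/c. *)
Lemma arith_sum_trunc n c F : 0 < c -> n %/ c <= F ->
  arith_sum n c F = arith_sum n c (n %/ c).
Proof.
move=> c_gt0 le_F; rewrite /arith_sum (big_cat_nat (n := (n %/ c).+1)) //= ?ltnS //.
rewrite [X in _ + X]big1_seq ?addn0 // => e /andP [_].
rewrite mem_index_iota => /andP [e_gt _].
apply/eqP; rewrite subn_eq0; have := ltn_ceil n c_gt0; nia.
Qed.

Lemma arith_sumE n c E : c * E <= n -> 2 * arith_sum n c E + c * E * (E + 1) = 2 * n * E.
Proof.
rewrite /arith_sum; elim: E => [|E IH] le_n; first by rewrite big_geq // !muln0.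
rewrite big_nat_recr //= mulnDr.
have : c * E <= n by nia.
move=> /IH; nia.
Qed.

Lemma N4_ndvd_bounds n :
  363 * N4_ndvd n <= 5 * n ^ 2 + 30 * n /\ 5 * n ^ 2 <= 363 * N4_ndvd n + 325 * n.
Proof.
have /andP [lo hi] := N4_ndvd_sandwich n.
have le_q : n %/ 33 <= n %/ 11 by apply: leq_div2l.
rewrite (arith_sum_trunc _ _ _ (isT : 0 < 33) le_q) in lo hi.
have le_n : 33 * (n %/ 33) <= n by rewrite mulnC leq_divM.
have := arith_sumE _ _ _ le_n.
have := divn_eq n 33; have := ltn_pmod n (isT : 0 < 33); have := leq_divM n 11.
move: (n %/ 11) (n %/ 33) (n %% 33) (arith_sum n 33 (n %/ 33)) lo hi.
move=> q E r S lo hi q_le r_lt n_eq S_eq; split; nia.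
Qed.

Lemma N4_bounds n : 72 * N4 n <= n ^ 2 + 100 * n /\ n ^ 2 <= 72 * N4 n + 100 * n.
Proof.
elim/ltn_ind: n => n IH; case: n IH => [|n] IH; first by rewrite /N4 big_geq.
have [IH_lo IH_hi] := IH _ (ltn_Pdiv (isT : 1 < 11) (ltn0Sn n)).
have [A_lo A_hi] := N4_ndvd_bounds n.+1.
have := divn_eq n.+1 11; have := ltn_pmod n.+1 (isT : 0 < 11).
rewrite N4_rec; move: IH_lo IH_hi A_lo A_hi.
move: (n.+1 %/ 11) (n.+1 %% 11) (N4_ndvd n.+1) (N4 (n.+1 %/ 11)) n.+1.
move=> q r A N m IH_lo IH_hi A_lo A_hi r_lt m_eq; split; nia.
Qed.

Local Open Scope ring_scope.

Theorem mainTheorem6 :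
  exists C : rat, forall n : nat,
    `| (N4 n)%:R - (n ^ 2)%:R / 72%:R | <= C * n%:R.
Proof.
exists (100%:R / 72%:R) => n.
have [lo hi] := N4_bounds n.
have lo_q : ((72 * N4 n)%:R <= (n ^ 2 + 100 * n)%:R :> rat) by rewrite ler_nat.
have hi_q : ((n ^ 2)%:R <= (72 * N4 n + 100 * n)%:R :> rat) by rewrite ler_nat.
rewrite !natrD !natrM in lo_q hi_q.
move: lo_q hi_q; set x := (n ^ 2)%:R; set N := (N4 n)%:R; set m := n%:R.
by move=> lo_q hi_q; rewrite ler_norml; apply/andP; split; lra.
Qed.
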